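(* Let $\psi_n(x)=e^{-n^{1/2}x^2/2}\big(\cosh(xn^{-1/4})\big)^n$ and $I_\infty=\int_{\mathbb{R}}e^{-x^4/12}dx$. For every $b\ge0$ and every $\eta>0$ there is $n_0$ such that for all $n\ge n_0$ and all $\xi\in\mathbb{R}$, $$|\widehat{\psi_n}(\xi)|\le(1+\eta)\,K(b)\,e^{-b|\xi|},\qquad K(b)=2e^{13b^4/12}\big(2\sqrt3\,b+I_\infty\big),$$ where $\widehat{\psi_n}(\xi)=\int_{\mathbb{R}}\psi_n(x)e^{i\xi x}dx$. *)

From Stdlib Require Import Reals.
Open Scope R_scope.

Definition improper_integral_R (f : R -> R) (l : R) : Prop :=
  (forall a b : R, inhabited (Riemann_integrable f a b)) /\
  (forall eps : R, eps > 0 -> exists M : R,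
     forall (a b : R) (pr : Riemann_integrable f a b),
       a <= - M -> M <= b -> Rabs (RiemannInt pr - l) < eps).

Definition psi (n : nat) (x : R) : R :=
  exp (- sqrt (INR n) * x ^ 2 / 2) * (cosh (x * Rpower (INR n) (- / 4))) ^ n.

Definition K (Iinf b : R) : R :=
  2 * exp (13 * b ^ 4 / 12) * (2 * sqrt 3 * b + Iinf).

(* The function [f(z) = exp (- sqrt n z^2 / 2 + i xi z) cosh (n^{-1/4} z)^n] is entire and
   equals [psi_n(x) e^{i xi x}] on the real axis. By Cauchy's theorem (the vertical sides of the
   rectangles vanish at infinity) the Fourier integral can be computed on the line
   [Im z = t = b sgn xi], where [|e^{i xi z}| = e^{- b |xi|}]. On that line
   [|f(x + i t)| <= e^{- b |xi|} psi_n(x) e^{b^2 x^2/2 + b^4/6}], and the bounds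
   [ln cosh p <= p^2/2 - c4 p^4] for [|p| <= 1/3], [ln cosh p <= (1/2 - kappa) p^2] beyond,
   dominate this by [e^{- b |xi|}] times [e^{- c4 x^4 + b^2 x^2/2 + b^4/6}] plus a tail of total
   mass [O(n^{-3/4})]. The first term integrates to at most [(625/576) e^{13 b^4/12} (2 sqrt 3 b + I)],
   which leaves room for the tail inside [K(b)] once [n] is large. *)

From Stdlib Require Import Reals Lra Lia Psatz.
From Coquelicot Require Import Coquelicot.
Open Scope R_scope.

(** * Elementary inequalities *)

Lemma exp_le_compat x y : x <= y -> exp x <= exp y.
Proof. intros [Hlt | ->]; [now apply Rlt_le, exp_increasing | apply Rle_refl]. Qed.

Lemma le_by_derive (f g df dg : R -> R) a y :
  (forall t, is_derive f t (df t)) -> (forall t, is_derive g t (dg t)) ->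
  f a <= g a -> a <= y -> (forall t, a <= t <= y -> df t <= dg t) -> f y <= g y.
Proof.
  intros Hf Hg Ha Hay Hd.
  destruct (MVT_gen (fun t => g t - f t) a y (fun t => dg t - df t)) as [th [Hth E]].
  - intros t _. now apply (is_derive_minus g f).
  - intros t _. apply derivable_continuous_pt, (derivable_pt_minus g f);
      [exists (dg t) | exists (df t)]; now apply is_derive_Reals.
  - rewrite Rmin_left, Rmax_right in Hth by lra.
    specialize (Hd th Hth). nra.
Qed.

Lemma exp_pow x n : exp x ^ n = exp (INR n * x).
Proof.
  induction n as [|n IH]; simpl pow.
  - now rewrite Rmult_0_l, exp_0.
  - rewrite IH, <- exp_plus, S_INR. f_equal. ring.
Qed.

Lemma exp_ge_quadratic y : 0 <= y -> 1 + y + y ^ 2 / 2 <= exp y.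
Proof.
  intros Hy.
  apply (le_by_derive (fun t => 1 + t + t ^ 2 / 2) exp (fun t => 1 + t) exp 0 y); auto.
  - intros t. auto_derive; auto. field.
  - intros t. apply is_derive_exp.
  - rewrite exp_0. lra.
  - intros t _. apply exp_ineq1_le.
Qed.

Lemma is_derive_sinh x : is_derive sinh x (cosh x).
Proof. apply is_derive_Reals, derivable_pt_lim_sinh. Qed.

Lemma cosh_sqr_sub_sinh_sqr x : cosh x ^ 2 - sinh x ^ 2 = 1.
Proof. unfold cosh, sinh. rewrite exp_Ropp. field. apply Rgt_not_eq, exp_pos. Qed.

Lemma cosh_pos x : 0 < cosh x.
Proof. unfold cosh. pose proof (exp_pos x); pose proof (exp_pos (-x)). lra. Qed.

Lemma cosh_ge_1 x : 1 <= cosh x.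
Proof. pose proof (cosh_sqr_sub_sinh_sqr x). pose proof (cosh_pos x). nra. Qed.

Lemma cosh_opp x : cosh (- x) = cosh x.
Proof. unfold cosh. rewrite Ropp_involutive. field. Qed.
Lemma sinh_opp x : sinh (- x) = - sinh x.
Proof. unfold sinh. rewrite Ropp_involutive. field. Qed.

Lemma sinh_ge_0 x : 0 <= x -> 0 <= sinh x.
Proof. intros Hx. unfold sinh. pose proof (exp_le_compat (- x) x ltac:(lra)). lra. Qed.

Lemma cosh_le_exp_abs x : cosh x <= exp (Rabs x).
Proof.
  unfold cosh. pose proof (exp_le_compat x (Rabs x) (Rle_abs x)).
  pose proof (exp_le_compat (- x) (Rabs x) (Rle_trans _ _ _ (Rle_abs (- x)) (Req_le _ _ (Rabs_Ropp x)))).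
  lra.
Qed.

Lemma sinh_le_mul_cosh p : 0 <= p -> sinh p <= p * cosh p.
Proof.
  intros Hp.
  apply (le_by_derive sinh (fun t => t * cosh t) cosh (fun t => cosh t + t * sinh t) 0 p); auto.
  - apply is_derive_sinh.
  - intros t. unfold cosh, sinh. auto_derive; auto. field.
  - rewrite sinh_0. lra.
  - intros t Ht. pose proof (sinh_ge_0 t (proj1 Ht)). nra.
Qed.

Lemma cubic_mul_cosh_le_sinh p : 0 <= p -> (p - p ^ 3 / 3) * cosh p <= sinh p.
Proof.
  intros Hp.
  apply (le_by_derive (fun t => (t - t ^ 3 / 3) * cosh t) sinh
           (fun t => (1 - t ^ 2) * cosh t + (t - t ^ 3 / 3) * sinh t) cosh 0 p); auto.
  - intros t. unfold cosh, sinh. auto_derive; auto. field.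
  - apply is_derive_sinh.
  - rewrite sinh_0. lra.
  - intros t [Ht _]. pose proof (sinh_le_mul_cosh t Ht). pose proof (sinh_ge_0 t Ht).
    pose proof (cosh_pos t).
    assert (0 <= t ^ 3 * sinh t) by (apply Rmult_le_pos; [apply pow_le |]; lra).
    nra.
Qed.

(* [ln (cosh p) = p^2/2 - p^4/12 + O(p^6)]. Near [0] the quartic term is kept with the
   slightly smaller coefficient [c4], chosen so that [exp (- c4 x^4) = exp (- (lambda x)^4 / 12)];
   [kappa] is the relative deficit that survives away from [0] (see [cosh_le_exp_kappa]). *)
Definition lambda := 24 / 25.
Definition c4 := lambda ^ 4 / 12.
Definition kappa := c4 / 1296.

Lemma c4_val : c4 = 331776 / 4687500.
Proof. unfold c4, lambda. field. Qed.

Lemma sinh_le_mul_cosh_quartic p : 0 <= p <= 1 / 3 ->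
  sinh p <= (p - 4 * c4 * p ^ 3) * cosh p.
Proof.
  intros Hp.
  apply (le_by_derive sinh (fun t => (t - 4 * c4 * t ^ 3) * cosh t)
           cosh (fun t => (1 - 12 * c4 * t ^ 2) * cosh t + (t - 4 * c4 * t ^ 3) * sinh t) 0 p);
    try lra.
  - apply is_derive_sinh.
  - intros t. unfold cosh, sinh. auto_derive; auto. field.
  - rewrite sinh_0. lra.
  - intros t Ht. pose proof (cubic_mul_cosh_le_sinh t (proj1 Ht)). pose proof (cosh_pos t).
    rewrite c4_val in *.
    assert (Hpos : 0 <= t - 4 * (331776 / 4687500) * t ^ 3) by nra.
    assert (0 <= t ^ 2 * cosh t * (- 12 * (331776 / 4687500)
              + (1 - 4 * (331776 / 4687500) * t ^ 2) * (1 - t ^ 2 / 3))).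
    { apply Rmult_le_pos; [apply Rmult_le_pos |]; nra. }
    nra.
Qed.

Lemma is_derive_ln_cosh x : is_derive (fun t => ln (cosh t)) x (sinh x / cosh x).
Proof.
  pose proof (cosh_pos x) as Hc. unfold cosh, sinh in *.
  auto_derive; [lra | field; lra].
Qed.

Lemma cosh_abs p : cosh (Rabs p) = cosh p.
Proof. destruct (Rle_dec 0 p); [rewrite Rabs_right | rewrite Rabs_left, cosh_opp]; lra. Qed.

Lemma cosh_le_exp_quartic p : Rabs p <= 1 / 3 -> cosh p <= exp (p ^ 2 / 2 - c4 * p ^ 4).
Proof.
  intros Hp. replace (p ^ 4) with ((p ^ 2) ^ 2) by ring.
  rewrite <- cosh_abs, <- (pow2_abs p).
  set (a := Rabs p) in *. assert (Ha : 0 <= a) by apply Rabs_pos.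
  replace ((a ^ 2) ^ 2) with (a ^ 4) by ring.
  rewrite <- (exp_ln (cosh a)) by apply cosh_pos. apply exp_le_compat.
  apply (le_by_derive (fun t => ln (cosh t)) (fun t => t ^ 2 / 2 - c4 * t ^ 4)
           (fun t => sinh t / cosh t) (fun t => t - 4 * c4 * t ^ 3) 0 a); try lra.
  - apply is_derive_ln_cosh.
  - intros t. auto_derive; auto. field.
  - rewrite cosh_0, ln_1. lra.
  - intros t Ht. apply Rle_div_l; [apply cosh_pos | apply sinh_le_mul_cosh_quartic; lra].
Qed.

Lemma ln_cosh_le_abs p : ln (cosh p) <= Rabs p.
Proof.
  rewrite <- (ln_exp (Rabs p)). apply ln_le. apply cosh_pos. apply cosh_le_exp_abs.
Qed.

(* At [1/3] the quartic bound leaves a deficit [c4/81] below [p^2/2]; as [ln cosh p - p^2/2]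
   decreases, the deficit persists and dominates [kappa p^2 = (c4/81) (p/4)^2] up to [p = 4].
   Beyond [4], [ln cosh p <= p] suffices. *)
Lemma cosh_le_exp_kappa p : 1 / 3 <= Rabs p -> cosh p <= exp ((1 / 2 - kappa) * p ^ 2).
Proof.
  intros Hp. rewrite <- cosh_abs, <- (pow2_abs p).
  set (a := Rabs p) in *.
  rewrite <- (exp_ln (cosh a)) by apply cosh_pos. apply exp_le_compat.
  assert (Hdecr : ln (cosh a) <= ln (cosh (1 / 3)) + (a ^ 2 - (1 / 3) ^ 2) / 2).
  { apply (le_by_derive (fun t => ln (cosh t)) (fun t => ln (cosh (1 / 3)) + (t ^ 2 - (1 / 3) ^ 2) / 2)
             (fun t => sinh t / cosh t) (fun t => t) (1 / 3) a); try lra.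
    - apply is_derive_ln_cosh.
    - intros t. auto_derive; auto. field.
    - intros t Ht. apply Rle_div_l; [apply cosh_pos | apply sinh_le_mul_cosh; lra]. }
  assert (H13 : ln (cosh (1 / 3)) <= (1 / 3) ^ 2 / 2 - c4 * (1 / 3) ^ 4).
  { rewrite <- (ln_exp (_ - _)). apply ln_le. apply cosh_pos.
    apply cosh_le_exp_quartic. rewrite Rabs_right; lra. }
  pose proof (ln_cosh_le_abs a) as Hlin. rewrite Rabs_right in Hlin by lra.
  assert (Hc : 0 < c4 <= 1) by (rewrite c4_val; lra).
  unfold kappa. destruct (Rle_dec a 4).
  - assert (a ^ 2 <= 16) by nra. nra.
  - nra.
Qed.

Lemma sin_sqr_le q : sin q ^ 2 <= q ^ 2.
Proof.
  assert (Hpos : forall u, 0 <= u -> sin u ^ 2 <= u ^ 2).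
  { intros u [Hu | <-]; [| rewrite sin_0; lra].
    pose proof (sin_lt_x u Hu). pose proof (SIN_bound u).
    destruct (Rle_dec u 1).
    - assert (0 <= sin u) by (apply sin_ge_0; pose proof PI2_3_2; lra). nra.
    - nra. }
  destruct (Rle_dec 0 q); [now apply Hpos |].
  replace (sin q ^ 2) with (sin (- q) ^ 2) by (rewrite sin_neg; ring).
  replace (q ^ 2) with ((- q) ^ 2) by ring. apply Hpos. lra.
Qed.

Lemma cos_ge_quadratic q : 0 <= q -> 1 - q ^ 2 / 2 <= cos q.
Proof.
  intros Hq.
  apply (le_by_derive (fun t => 1 - t ^ 2 / 2) cos (fun t => - t) (fun t => - sin t) 0 q); auto.
  - intros t. auto_derive; auto. field.
  - intros t. apply is_derive_cos.
  - rewrite cos_0. lra.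
  - intros t [Ht _]. destruct Ht as [Ht | <-]; [pose proof (sin_lt_x t Ht) | rewrite sin_0]; lra.
Qed.

Lemma sin_ge_cubic q : 0 <= q -> q - q ^ 3 / 6 <= sin q.
Proof.
  intros Hq.
  apply (le_by_derive (fun t => t - t ^ 3 / 6) sin (fun t => 1 - t ^ 2 / 2) cos 0 q); auto.
  - intros t. auto_derive; auto. field.
  - intros t. apply is_derive_sin.
  - rewrite sin_0. lra.
  - intros t Ht. now apply cos_ge_quadratic.
Qed.

Lemma sin_sqr_ge q : q ^ 2 - q ^ 4 / 3 <= sin q ^ 2.
Proof.
  assert (Hpos : forall u, 0 <= u -> u ^ 2 - u ^ 4 / 3 <= sin u ^ 2).
  { intros u Hu. destruct (Rle_dec (u ^ 2) 6).
    - pose proof (sin_ge_cubic u Hu). assert (0 <= u - u ^ 3 / 6) by nra.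
      assert ((u - u ^ 3 / 6) ^ 2 <= sin u ^ 2) by (apply pow_incr; lra). nra.
    - nra. }
  destruct (Rle_dec 0 q); [now apply Hpos |].
  replace (sin q ^ 2) with (sin (- q) ^ 2) by (rewrite sin_neg; ring).
  replace (q ^ 2 - q ^ 4 / 3) with ((- q) ^ 2 - (- q) ^ 4 / 3) by field. apply Hpos. lra.
Qed.

Lemma cosh_sqr_mul_le p : cosh p ^ 2 * (1 - p ^ 2) <= 1.
Proof.
  assert (Hsinh : sinh p ^ 2 <= p ^ 2 * cosh p ^ 2).
  { rewrite <- cosh_abs, <- (pow2_abs p). replace (sinh p ^ 2) with (sinh (Rabs p) ^ 2).
    - pose proof (Rabs_pos p). pose proof (sinh_le_mul_cosh _ (Rabs_pos p)).
      pose proof (sinh_ge_0 _ (Rabs_pos p)). nra.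
    - destruct (Rle_dec 0 p).
      + rewrite Rabs_right by lra. reflexivity.
      + rewrite Rabs_left, sinh_opp by lra. ring. }
  pose proof (cosh_sqr_sub_sinh_sqr p). nra.
Qed.

(** * Holomorphy and contour shifts *)

Definition continuous2 (f : R -> R -> R) := forall x s, continuity_2d_pt f x s.

(* [F] and [F'] are functions of [z = x + i s]; [F] is holomorphic with derivative [F'] in
   the form of the Cauchy-Riemann equations, with [F] and [F'] jointly continuous. *)
Record cauchy_riemann (F F' : R -> R -> C) : Prop := {
  cr_re_x : forall x s, is_derive (fun y => fst (F y s)) x (fst (F' x s));
  cr_im_x : forall x s, is_derive (fun y => snd (F y s)) x (snd (F' x s));
  cr_re_s : forall x s, is_derive (fun t => fst (F x t)) s (- snd (F' x s));
  cr_im_s : forall x s, is_derive (fun t => snd (F x t)) s (fst (F' x s));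
  cr_re_cont : continuous2 (fun x s => fst (F x s));
  cr_im_cont : continuous2 (fun x s => snd (F x s));
  cr_re'_cont : continuous2 (fun x s => fst (F' x s));
  cr_im'_cont : continuous2 (fun x s => snd (F' x s)) }.

Definition holomorphic (F : R -> R -> C) := exists F', cauchy_riemann F F'.

Definition Cexp (z : C) : C := (exp (fst z) * cos (snd z), exp (fst z) * sin (snd z)).

(* Coquelicot's rules specialized to [R -> R], with the derivative written using [+] and [*]
   rather than [plus] and [scal], so that [derive_step] below can match them syntactically. *)
Lemma derive_eq (f : R -> R) (x l l' : R) : is_derive f x l -> l = l' -> is_derive f x l'.
Proof. now intros H <-. Qed.
Lemma derive_const (c x : R) : is_derive (fun _ => c) x 0.
Proof. apply (is_derive_const c x). Qed.
Lemma derive_id (x : R) : is_derive (fun t => t) x 1.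
Proof. apply (is_derive_id x). Qed.
Lemma derive_plus (f g : R -> R) x df dg : is_derive f x df -> is_derive g x dg ->
  is_derive (fun t => f t + g t) x (df + dg).
Proof. apply (is_derive_plus f g). Qed.
Lemma derive_minus (f g : R -> R) x df dg : is_derive f x df -> is_derive g x dg ->
  is_derive (fun t => f t - g t) x (df - dg).
Proof. apply (is_derive_minus f g). Qed.
Lemma derive_opp (f : R -> R) x df : is_derive f x df -> is_derive (fun t => - f t) x (- df).
Proof. apply (is_derive_opp f). Qed.
Lemma derive_mult (f g : R -> R) x df dg : is_derive f x df -> is_derive g x dg ->
  is_derive (fun t => f t * g t) x (df * g x + f x * dg).
Proof. intros; apply (is_derive_mult f g); auto. intros; apply Rmult_comm. Qed.
Lemma derive_exp (f : R -> R) x df : is_derive f x df ->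
  is_derive (fun t => exp (f t)) x (df * exp (f x)).
Proof. intros; apply (is_derive_comp exp f); auto. apply is_derive_exp. Qed.
Lemma derive_cos (f : R -> R) x df : is_derive f x df ->
  is_derive (fun t => cos (f t)) x (df * - sin (f x)).
Proof. intros; apply (is_derive_comp cos f); auto. apply is_derive_cos. Qed.
Lemma derive_sin (f : R -> R) x df : is_derive f x df ->
  is_derive (fun t => sin (f t)) x (df * cos (f x)).
Proof. intros; apply (is_derive_comp sin f); auto. apply is_derive_sin. Qed.

Lemma continuous2_plus f g : continuous2 f -> continuous2 g -> continuous2 (fun x s => f x s + g x s).
Proof. intros Hf Hg x s; apply continuity_2d_pt_plus; auto. Qed.
Lemma continuous2_minus f g : continuous2 f -> continuous2 g -> continuous2 (fun x s => f x s - g x s).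
Proof. intros Hf Hg x s; apply continuity_2d_pt_minus; auto. Qed.
Lemma continuous2_mult f g : continuous2 f -> continuous2 g -> continuous2 (fun x s => f x s * g x s).
Proof. intros Hf Hg x s; apply continuity_2d_pt_mult; auto. Qed.
Lemma continuous2_opp f : continuous2 f -> continuous2 (fun x s => - f x s).
Proof. intros Hf x s; apply continuity_2d_pt_opp; auto. Qed.
Lemma continuous2_comp (g : R -> R) f : continuity g -> continuous2 f ->
  continuous2 (fun x s => g (f x s)).
Proof. intros Hg Hf x s; apply continuity_1d_2d_pt_comp; auto. Qed.

Ltac derive_step := match goal with
  | |- is_derive (fun _ => _ + _) _ _ => apply derive_plus
  | |- is_derive (fun _ => _ - _) _ _ => apply derive_minus
  | |- is_derive (fun _ => _ * _) _ _ => apply derive_mult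
  | |- is_derive (fun _ => - _) _ _ => apply derive_opp
  | |- is_derive (fun _ => exp _) _ _ => apply derive_exp
  | |- is_derive (fun _ => cos _) _ _ => apply derive_cos
  | |- is_derive (fun _ => sin _) _ _ => apply derive_sin
  | |- is_derive (fun t => t) _ _ => apply derive_id
  | H : forall _ _, is_derive (fun y => ?p (?F y _)) _ _ |- is_derive (fun y => ?p (?F y _)) _ _ =>
      apply H
  | H : forall _ _, is_derive (fun y => ?p (?F _ y)) _ _ |- is_derive (fun y => ?p (?F _ y)) _ _ =>
      apply H
  | |- is_derive (fun _ => _) _ _ => apply derive_const
  end.

Ltac continuous2_step := match goal with
  | |- continuous2 (fun _ _ => _ + _) => apply continuous2_plus
  | |- continuous2 (fun _ _ => _ - _) => apply continuous2_minus
  | |- continuous2 (fun _ _ => _ * _) => apply continuous2_mult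
  | |- continuous2 (fun _ _ => - _) => apply continuous2_opp
  | |- continuous2 (fun _ _ => exp _) =>
      apply (continuous2_comp exp); [exact (derivable_continuous _ derivable_exp) |]
  | |- continuous2 (fun _ _ => cos _) => apply (continuous2_comp cos); [exact continuity_cos |]
  | |- continuous2 (fun _ _ => sin _) => apply (continuous2_comp sin); [exact continuity_sin |]
  | H : continuous2 ?f |- continuous2 ?f => exact H
  | |- continuous2 (fun x _ => x) => intros ? ?; apply continuity_2d_pt_id1
  | |- continuous2 (fun _ s => s) => intros ? ?; apply continuity_2d_pt_id2
  | |- continuous2 (fun _ _ => _) => intros ? ?; apply continuity_2d_pt_const
  end.

Ltac cauchy_riemann_tac :=
  unfold Cmult, Cplus, Copp, RtoC, Cexp; split;
  lazymatch goal with
  | |- continuous2 _ => cbn [fst snd]; repeat continuous2_step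
  | |- _ => intros; cbn [fst snd]; eapply derive_eq; [repeat derive_step | simpl; field]
  end.

Lemma holomorphic_const c : holomorphic (fun _ _ => c).
Proof. exists (fun _ _ => 0%C). cauchy_riemann_tac. Qed.

Lemma holomorphic_id : holomorphic (fun x s => (x, s)).
Proof. exists (fun _ _ => 1%C). cauchy_riemann_tac. Qed.

Lemma holomorphic_plus F G : holomorphic F -> holomorphic G ->
  holomorphic (fun x s => (F x s + G x s)%C).
Proof.
  intros [F' []] [G' []]. exists (fun x s => (F' x s + G' x s)%C). cauchy_riemann_tac.
Qed.

Lemma holomorphic_opp F : holomorphic F -> holomorphic (fun x s => (- F x s)%C).
Proof. intros [F' []]. exists (fun x s => (- F' x s)%C). cauchy_riemann_tac. Qed.

Lemma holomorphic_mult F G : holomorphic F -> holomorphic G ->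
  holomorphic (fun x s => (F x s * G x s)%C).
Proof.
  intros [F' []] [G' []].
  exists (fun x s => (F' x s * G x s + F x s * G' x s)%C). cauchy_riemann_tac.
Qed.

Lemma holomorphic_Cexp F : holomorphic F -> holomorphic (fun x s => Cexp (F x s)).
Proof.
  intros [F' []]. exists (fun x s => (Cexp (F x s) * F' x s)%C). cauchy_riemann_tac.
Qed.

Lemma holomorphic_Cpow F n : holomorphic F -> holomorphic (fun x s => (F x s ^ n)%C).
Proof.
  intros HF; induction n as [|n IH]; simpl.
  - apply holomorphic_const.
  - now apply (holomorphic_mult F (fun x s => (F x s ^ n)%C)).
Qed.

Lemma continuity_pt_of_2d f x y : continuity_2d_pt f x y -> continuity_pt (fun u => f u y) x.
Proof.
  intros H eps Heps. destruct (H (mkposreal eps Heps)) as [d Hd].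
  exists d. split; [apply cond_pos |]. intros u [_ Hu]. simpl in *. unfold R_dist in *.
  apply (Hd u y); auto. rewrite Rminus_diag, Rabs_R0. apply cond_pos.
Qed.

Lemma continuity_2d_pt_swap f x y : continuity_2d_pt f x y -> continuity_2d_pt (fun u v => f v u) y x.
Proof. intros H eps. destruct (H eps) as [d Hd]. exists d. intros u v Hu Hv. now apply Hd. Qed.

Lemma continuous_of_is_derive (f df : R -> R) x : (forall y, is_derive f y (df y)) -> continuous f x.
Proof. intros H. apply (ex_derive_continuous f x). now exists (df x). Qed.

(* Differentiate under the integral sign and use [d/ds fst F = - d/dx snd F]: the derivative
   of a horizontal integral with respect to the height is a boundary term. *)
Lemma is_derive_RInt_fst F F' a c s : cauchy_riemann F F' ->
  is_derive (fun s => RInt (fun x => fst (F x s)) a c) s (snd (F a s) - snd (F c s)).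
Proof.
  intros []. eapply derive_eq.
  - apply (is_derive_RInt_param (fun u t => fst (F t u)) a c s).
    + apply filter_forall. intros y t _. exists (- snd (F' t y)). apply cr_re_s0.
    + intros t _. eapply continuity_2d_pt_ext.
      2: { apply continuity_2d_pt_swap, continuity_2d_pt_opp, cr_im'_cont0. }
      intros u v. symmetry. apply is_derive_unique, cr_re_s0.
    + apply filter_forall. intros y. apply (ex_RInt_continuous (V:=R_CompleteNormedModule)).
      intros z _. apply (continuous_of_is_derive _ (fun x => fst (F' x y))). intros; apply cr_re_x0.
  - rewrite (RInt_ext _ (fun x => - snd (F' x s))).
    2: { intros x _. apply is_derive_unique, cr_re_s0. }
    apply is_RInt_unique.
    replace (snd (F a s) - snd (F c s)) with (- (snd (F c s) - snd (F a s))) by ring.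
    apply (is_RInt_opp (V:=R_NormedModule) (fun x => snd (F' x s))).
    apply (is_RInt_derive (fun x => snd (F x s)) (fun x => snd (F' x s))).
    + intros; apply cr_im_x0.
    + intros; apply continuity_pt_filterlim, (continuity_pt_of_2d (fun x s => snd (F' x s))), cr_im'_cont0.
Qed.

Lemma cauchy_riemann_mul_neg_i F F' : cauchy_riemann F F' ->
  cauchy_riemann (fun x s => (snd (F x s), - fst (F x s))) (fun x s => (snd (F' x s), - fst (F' x s))).
Proof. intros []. cauchy_riemann_tac. Qed.

Lemma is_derive_RInt_snd F F' a c s : cauchy_riemann F F' ->
  is_derive (fun s => RInt (fun x => snd (F x s)) a c) s (fst (F c s) - fst (F a s)).
Proof.
  intros HF. eapply derive_eq.
  - exact (is_derive_RInt_fst _ _ a c s (cauchy_riemann_mul_neg_i F F' HF)).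
  - cbn [fst snd]. ring.
Qed.

Lemma Rabs_fst_le_Cmod z : Rabs (fst z) <= Cmod z.
Proof. eapply Rle_trans; [apply Rmax_l | apply Rmax_Cmod]. Qed.
Lemma Rabs_snd_le_Cmod z : Rabs (snd z) <= Cmod z.
Proof. eapply Rle_trans; [apply Rmax_r | apply Rmax_Cmod]. Qed.

Lemma mvt_abs_le (g dg : R -> R) t M : (forall s, is_derive g s (dg s)) ->
  (forall s, Rabs s <= Rabs t -> Rabs (dg s) <= M) -> Rabs (g t - g 0) <= M * Rabs t.
Proof.
  intros Hg HM. destruct (MVT_abs g dg 0 t) as [th [-> Hth]].
  - intros s _. apply is_derive_Reals, Hg.
  - rewrite Rminus_0_r. apply Rmult_le_compat_r; [apply Rabs_pos |]. apply HM.
    unfold Rmin, Rmax in Hth. destruct (Rle_dec 0 t); apply Rabs_le; split_Rabs; lra.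
Qed.

(* Cauchy's theorem on the rectangle [a, c] x [0, t], in the form of an estimate: the
   horizontal integrals at heights [0] and [t] differ by at most the vertical sides. *)
Lemma horizontal_shift_le F a c t delta : holomorphic F ->
  (forall th, Rabs th <= Rabs t -> Cmod (F a th) <= delta /\ Cmod (F c th) <= delta) ->
  Rabs (RInt (fun x => fst (F x t)) a c - RInt (fun x => fst (F x 0)) a c) <= 2 * delta * Rabs t /\
  Rabs (RInt (fun x => snd (F x t)) a c - RInt (fun x => snd (F x 0)) a c) <= 2 * delta * Rabs t.
Proof.
  intros [F' HF] Hside.
  assert (Hdiff : forall u v, Rabs u <= delta -> Rabs v <= delta -> Rabs (u - v) <= 2 * delta).
  { intros u v Hu Hv. unfold Rminus. eapply Rle_trans; [apply Rabs_triang |].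
    rewrite Rabs_Ropp. lra. }
  split.
  - apply (mvt_abs_le (fun s => RInt (fun x => fst (F x s)) a c) (fun s => snd (F a s) - snd (F c s))).
    + intros s. now apply (is_derive_RInt_fst F F').
    + intros th Hth. destruct (Hside th Hth).
      apply Hdiff; (eapply Rle_trans; [apply Rabs_snd_le_Cmod | assumption]).
  - apply (mvt_abs_le (fun s => RInt (fun x => snd (F x s)) a c) (fun s => fst (F c s) - fst (F a s))).
    + intros s. now apply (is_derive_RInt_snd F F').
    + intros th Hth. destruct (Hside th Hth).
      apply Hdiff; (eapply Rle_trans; [apply Rabs_fst_le_Cmod | assumption]).
Qed.

(** * The integrand and its modulus *)

Definition Ccosh (z : C) : C := (RtoC (/ 2) * (Cexp z + Cexp (- z)))%C.

Definition fourier_integrand (al r xi : R) (n : nat) (x s : R) : C :=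
  let z := (x, s) in
  (Cexp (RtoC (- al / 2) * z * z + (0, xi) * z) * Ccosh (RtoC r * z) ^ n)%C.

Lemma holomorphic_fourier_integrand al r xi n : holomorphic (fourier_integrand al r xi n).
Proof.
  unfold fourier_integrand, Ccosh.
  repeat first [ apply holomorphic_mult | apply holomorphic_plus | apply holomorphic_Cexp
               | apply holomorphic_opp | apply holomorphic_Cpow | apply holomorphic_id
               | apply holomorphic_const ].
Qed.

Lemma Cmod_Cexp z : Cmod (Cexp z) = exp (fst z).
Proof.
  unfold Cmod, Cexp; cbn [fst snd].
  replace ((exp (fst z) * cos (snd z)) ^ 2 + (exp (fst z) * sin (snd z)) ^ 2)
    with (exp (fst z) ^ 2 * (sin (snd z) ^ 2 + cos (snd z) ^ 2)) by ring.
  rewrite <- !Rsqr_pow2, sin2_cos2, Rmult_1_r, Rsqr_pow2.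
  apply sqrt_pow2. left; apply exp_pos.
Qed.

Lemma Ccosh_eq p q : Ccosh (p, q) = (cosh p * cos q, sinh p * sin q).
Proof.
  unfold Ccosh, Cmult, Cplus, Copp, RtoC, Cexp, cosh, sinh; cbn [fst snd].
  rewrite cos_neg, sin_neg. f_equal; field.
Qed.

Lemma Cmod_Ccosh p q : Cmod (Ccosh (p, q)) = sqrt (cosh p ^ 2 - sin q ^ 2).
Proof.
  rewrite Ccosh_eq. unfold Cmod; cbn [fst snd]. f_equal.
  pose proof (cosh_sqr_sub_sinh_sqr p). pose proof (sin2_cos2 q). rewrite <- !Rsqr_pow2 in *.
  unfold Rsqr in *. nra.
Qed.

Lemma fourier_integrand_real al r xi n x :
  fourier_integrand al r xi n x 0 =
  (exp (- al * x ^ 2 / 2) * cosh (r * x) ^ n * cos (xi * x),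
   exp (- al * x ^ 2 / 2) * cosh (r * x) ^ n * sin (xi * x)).
Proof.
  unfold fourier_integrand.
  replace (RtoC r * (x, 0))%C with (RtoC (r * x)) by (unfold Cmult, RtoC; f_equal; simpl; ring).
  unfold RtoC at 2. rewrite Ccosh_eq, cos_0, sin_0, Rmult_0_r, Rmult_1_r.
  change ((cosh (r * x), 0) : C) with (RtoC (cosh (r * x))). rewrite <- RtoC_pow.
  replace (RtoC (- al / 2) * (x, 0) * (x, 0) + (0, xi) * (x, 0))%C
    with ((- al * x ^ 2 / 2, xi * x) : C) by (unfold Cmult, Cplus, RtoC; cbn [fst snd]; f_equal; field).
  unfold Cmult, Cexp, RtoC; cbn [fst snd]. f_equal; ring.
Qed.

Lemma Cmod_fourier_integrand al r xi n x s :
  Cmod (fourier_integrand al r xi n x s) =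
  exp (- al * (x ^ 2 - s ^ 2) / 2 - xi * s) * sqrt (cosh (r * x) ^ 2 - sin (r * s) ^ 2) ^ n.
Proof.
  unfold fourier_integrand. rewrite Cmod_mult, Cmod_pow, Cmod_Cexp.
  replace (RtoC r * (x, s))%C with ((r * x, r * s) : C) by (unfold Cmult, RtoC; f_equal; simpl; ring).
  rewrite Cmod_Ccosh. f_equal. f_equal. simpl. field.
Qed.

Lemma sqrt_sub_pow_le_exp A S n : 0 < A -> 0 <= S <= A ->
  sqrt (A - S) ^ n <= sqrt A ^ n * exp (- INR n * (S / A) / 2).
Proof.
  intros HA HS. set (w := S / A).
  assert (Hw : A - S = A * (1 - w)) by (unfold w; field; lra).
  assert (Hroot : sqrt (A - S) <= sqrt A * exp (- w / 2)).
  { rewrite Hw, sqrt_mult_alt by lra. apply Rmult_le_compat_l; [apply sqrt_pos |].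
    rewrite <- (sqrt_pow2 (exp (- w / 2))) by (left; apply exp_pos).
    apply sqrt_le_1_alt. rewrite exp_pow. replace (INR 2 * (- w / 2)) with (- w) by (simpl; field).
    pose proof (exp_ineq1_le (- w)). lra. }
  replace (exp (- INR n * w / 2)) with (exp (- w / 2) ^ n) by (rewrite exp_pow; f_equal; field).
  rewrite <- Rpow_mult_distr. apply pow_incr. split; [apply sqrt_pos | exact Hroot].
Qed.

Lemma sin_sqr_div_cosh_sqr_ge p q : q ^ 2 - q ^ 4 / 3 - q ^ 2 * p ^ 2 <= sin q ^ 2 / cosh p ^ 2.
Proof.
  set (A := cosh p ^ 2). set (S := sin q ^ 2).
  assert (HA : 1 <= A) by (unfold A; pose proof (cosh_ge_1 p); nra).
  assert (Hinv : 1 - p ^ 2 <= / A).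
  { apply (Rmult_le_reg_r A); [lra |]. rewrite Rinv_l by lra.
    pose proof (cosh_sqr_mul_le p) as Hc. change (cosh p ^ 2) with A in Hc. lra. }
  assert (HS : 0 <= S) by apply pow2_ge_0.
  assert (S * (1 - p ^ 2) <= S / A) by (apply Rmult_le_compat_l; lra).
  pose proof (sin_sqr_ge q) as Hge. pose proof (sin_sqr_le q) as Hle.
  change (sin q ^ 2) with S in Hge, Hle.
  assert (S * p ^ 2 <= q ^ 2 * p ^ 2) by (apply Rmult_le_compat_r; [apply pow2_ge_0 | lra]).
  nra.
Qed.

(* With [n r^4 = 1] and [al = n r^2]: the factor [e^{al t^2/2}] coming from moving the
   contour to height [t] is compensated by [|cosh (r (x + i t))|^n <= cosh (r x)^n e^{-n w/2}],
   where [w = sin (r t)^2 / cosh (r x)^2 ~ r^2 t^2]. *)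
Lemma shifted_cosh_pow_le (n : nat) (r al t x : R) : INR n * r ^ 4 = 1 -> al = INR n * r ^ 2 ->
  exp (al * t ^ 2 / 2) * sqrt (cosh (r * x) ^ 2 - sin (r * t) ^ 2) ^ n
  <= cosh (r * x) ^ n * exp (t ^ 2 * x ^ 2 / 2 + t ^ 4 / 6).
Proof.
  intros Hn Hal.
  set (p := r * x). set (q := r * t). set (A := cosh p ^ 2). set (S := sin q ^ 2).
  assert (HA : 1 <= A) by (unfold A; pose proof (cosh_ge_1 p); nra).
  assert (HS : 0 <= S <= 1) by (unfold S; pose proof (SIN_bound q); nra).
  assert (Hnw : al * t ^ 2 - t ^ 4 / 3 - t ^ 2 * x ^ 2 <= INR n * (S / A)).
  { assert (E1 : INR n * q ^ 2 = al * t ^ 2) by (unfold q; rewrite Hal; ring).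
    assert (E2 : INR n * q ^ 4 = t ^ 4)
      by (unfold q; replace (INR n * (r * t) ^ 4) with (INR n * r ^ 4 * t ^ 4) by ring;
          rewrite Hn; ring).
    assert (E3 : INR n * (q ^ 2 * p ^ 2) = t ^ 2 * x ^ 2)
      by (unfold q, p; replace (INR n * ((r * t) ^ 2 * (r * x) ^ 2))
            with (INR n * r ^ 4 * (t ^ 2 * x ^ 2)) by ring; rewrite Hn; ring).
    rewrite <- E1, <- E2, <- E3.
    replace (INR n * q ^ 2 - INR n * q ^ 4 / 3 - INR n * (q ^ 2 * p ^ 2))
      with (INR n * (q ^ 2 - q ^ 4 / 3 - q ^ 2 * p ^ 2)) by field.
    apply Rmult_le_compat_l; [apply pos_INR | apply sin_sqr_div_cosh_sqr_ge]. }
  pose proof (sqrt_sub_pow_le_exp A S n ltac:(lra) ltac:(lra)) as Hpow.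
  replace (sqrt A) with (cosh p) in Hpow by (symmetry; apply sqrt_pow2; left; apply cosh_pos).
  apply Rle_trans with (exp (al * t ^ 2 / 2) * (cosh p ^ n * exp (- INR n * (S / A) / 2))).
  { apply Rmult_le_compat_l; [left; apply exp_pos | exact Hpow]. }
  rewrite Rmult_comm, Rmult_assoc, <- exp_plus. apply Rmult_le_compat_l.
  - apply pow_le. left; apply cosh_pos.
  - apply exp_le_compat. lra.
Qed.

Definition inv_root4 (n : nat) := Rpower (INR n) (- / 4).

Lemma inv_root4_pos n : 0 < inv_root4 n.
Proof. apply exp_pos. Qed.

Lemma inv_root4_pow4 n : (1 <= n)%nat -> INR n * inv_root4 n ^ 4 = 1.
Proof.
  intros Hn. assert (H0 : 0 < INR n) by (apply lt_0_INR; lia).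
  unfold inv_root4. rewrite <- Rpower_pow by apply exp_pos.
  rewrite Rpower_mult. replace (- / 4 * INR 4) with (- (1)) by (simpl; field).
  rewrite Rpower_Ropp, Rpower_1 by exact H0. field. lra.
Qed.

Lemma sqrt_INR_inv_root4 n : (1 <= n)%nat -> sqrt (INR n) = INR n * inv_root4 n ^ 2.
Proof.
  intros Hn. pose proof (inv_root4_pow4 n Hn). pose proof (inv_root4_pos n).
  rewrite <- (sqrt_pow2 (INR n * inv_root4 n ^ 2)) by (apply Rmult_le_pos; [apply pos_INR | nra]).
  f_equal. replace ((INR n * inv_root4 n ^ 2) ^ 2) with (INR n * (INR n * inv_root4 n ^ 4)) by ring.
  rewrite H. ring.
Qed.

Lemma inv_root4_le_1 n : (1 <= n)%nat -> inv_root4 n <= 1.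
Proof.
  intros Hn. unfold inv_root4, Rpower. rewrite <- exp_0. apply exp_le_compat.
  assert (0 <= ln (INR n)).
  { rewrite <- ln_1. apply ln_le; [lra |]. apply (le_INR 1 n) in Hn. simpl in Hn. lra. }
  lra.
Qed.

Lemma psi_eq n x : psi n x = exp (- sqrt (INR n) * x ^ 2 / 2) * cosh (inv_root4 n * x) ^ n.
Proof. unfold psi. now rewrite (Rmult_comm x). Qed.

Lemma psi_le_exp_quartic n x : (1 <= n)%nat -> Rabs (inv_root4 n * x) <= 1 / 3 ->
  psi n x <= exp (- c4 * x ^ 4).
Proof.
  intros Hn Hx. rewrite psi_eq. set (r := inv_root4 n) in *.
  apply Rle_trans with (exp (- sqrt (INR n) * x ^ 2 / 2) * exp ((r * x) ^ 2 / 2 - c4 * (r * x) ^ 4) ^ n).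
  { apply Rmult_le_compat_l; [left; apply exp_pos |].
    apply pow_incr. split; [left; apply cosh_pos | now apply cosh_le_exp_quartic]. }
  rewrite exp_pow, <- exp_plus. apply exp_le_compat.
  rewrite (sqrt_INR_inv_root4 n Hn). fold r.
  replace (INR n * ((r * x) ^ 2 / 2 - c4 * (r * x) ^ 4))
    with (INR n * r ^ 2 * x ^ 2 / 2 - c4 * x ^ 4 * (INR n * r ^ 4)) by field.
  pose proof (inv_root4_pow4 n Hn) as H4. fold r in H4. rewrite H4. lra.
Qed.

Lemma psi_le_exp_kappa n x : (1 <= n)%nat -> 1 / 3 <= Rabs (inv_root4 n * x) ->
  psi n x <= exp (- kappa * sqrt (INR n) * x ^ 2).
Proof.
  intros Hn Hx. rewrite psi_eq. set (r := inv_root4 n) in *.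
  apply Rle_trans with (exp (- sqrt (INR n) * x ^ 2 / 2) * exp ((1 / 2 - kappa) * (r * x) ^ 2) ^ n).
  { apply Rmult_le_compat_l; [left; apply exp_pos |].
    apply pow_incr. split; [left; apply cosh_pos | now apply cosh_le_exp_kappa]. }
  rewrite exp_pow, <- exp_plus. apply exp_le_compat.
  rewrite (sqrt_INR_inv_root4 n Hn). fold r. right. field.
Qed.

Definition psi_integrand (n : nat) (xi : R) := fourier_integrand (sqrt (INR n)) (inv_root4 n) xi n.

Lemma psi_integrand_real n xi x :
  psi_integrand n xi x 0 = (psi n x * cos (xi * x), psi n x * sin (xi * x)).
Proof. unfold psi_integrand. now rewrite fourier_integrand_real, psi_eq. Qed.

Lemma Cmod_psi_integrand_le n xi x t : (1 <= n)%nat ->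
  Cmod (psi_integrand n xi x t) <= exp (- xi * t) * (psi n x * exp (t ^ 2 * x ^ 2 / 2 + t ^ 4 / 6)).
Proof.
  intros Hn. unfold psi_integrand. rewrite Cmod_fourier_integrand, psi_eq.
  set (al := sqrt (INR n)).
  replace (exp (- al * (x ^ 2 - t ^ 2) / 2 - xi * t))
    with (exp (- xi * t) * exp (- al * x ^ 2 / 2) * exp (al * t ^ 2 / 2))
    by (rewrite <- !exp_plus; f_equal; field).
  rewrite !Rmult_assoc. apply Rmult_le_compat_l; [left; apply exp_pos |].
  apply Rmult_le_compat_l; [left; apply exp_pos |].
  apply shifted_cosh_pow_le. now apply inv_root4_pow4. now apply sqrt_INR_inv_root4.
Qed.

Definition inner_majorant (b x : R) := exp (- c4 * x ^ 4 + b ^ 2 * x ^ 2 / 2 + b ^ 4 / 6).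
Definition outer_majorant (b Q x : R) := exp (b ^ 4 / 6) * (2 / (1 + Q ^ 2 * x ^ 2)).
Definition decay_rate (n : nat) := kappa * sqrt (INR n) / (6 * inv_root4 n).

Lemma inner_majorant_pos b x : 0 < inner_majorant b x.
Proof. apply exp_pos. Qed.
Lemma outer_majorant_pos b Q x : 0 < outer_majorant b Q x.
Proof. apply Rmult_lt_0_compat; [apply exp_pos | apply Rdiv_lt_0_compat; nra]. Qed.

Lemma decay_rate_pos n : 0 <= decay_rate n.
Proof.
  unfold decay_rate, kappa. rewrite c4_val. pose proof (sqrt_pos (INR n)). pose proof (inv_root4_pos n).
  apply Rdiv_le_0_compat; lra.
Qed.

Lemma exp_neg_le_rational y : 0 <= y -> exp (- y) <= 2 / (1 + y ^ 2).
Proof.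
  intros Hy. pose proof (exp_ge_quadratic y Hy). pose proof (exp_pos y).
  rewrite exp_Ropp. apply Rle_div_r; [nra |].
  apply (Rmult_le_reg_l (exp y)); [lra |].
  field_simplify; nra.
Qed.

Lemma decay_rate_mul_abs_le n x : 1 / 3 <= Rabs (inv_root4 n * x) ->
  decay_rate n * Rabs x <= kappa * sqrt (INR n) / 2 * x ^ 2.
Proof.
  intros Hx. set (r := inv_root4 n) in *. pose proof (inv_root4_pos n) as Hr. fold r in Hr.
  rewrite Rabs_mult, (Rabs_right r) in Hx by lra.
  assert (Hx' : / (3 * r) <= Rabs x).
  { apply (Rmult_le_reg_r (3 * r)); [lra |]. rewrite Rinv_l; lra. }
  assert (Hk : 0 < kappa) by (unfold kappa; rewrite c4_val; lra).
  pose proof (sqrt_pos (INR n)). pose proof (Rabs_pos x).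
  rewrite <- (pow2_abs x). unfold decay_rate. fold r.
  replace (kappa * sqrt (INR n) / (6 * r) * Rabs x)
    with (kappa * sqrt (INR n) * Rabs x * (/ (3 * r) / 2)) by (field; lra).
  replace (kappa * sqrt (INR n) / 2 * Rabs x ^ 2)
    with (kappa * sqrt (INR n) * Rabs x * (Rabs x / 2)) by field.
  apply Rmult_le_compat_l; [| lra]. apply Rmult_le_pos; [apply Rmult_le_pos |]; lra.
Qed.

(* Away from the origin the Gaussian [e^{- kappa sqrt n x^2}] beats [e^{b^2 x^2 / 2}] with
   room [e^{- Q |x|}] to spare, [Q = decay_rate n]. *)
Lemma psi_mul_exp_le_outer n b x : (1 <= n)%nat -> b ^ 2 <= kappa * sqrt (INR n) ->
  1 / 3 <= Rabs (inv_root4 n * x) ->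
  psi n x * exp (b ^ 2 * x ^ 2 / 2 + b ^ 4 / 6) <= outer_majorant b (decay_rate n) x.
Proof.
  intros Hn Hb Hx. pose proof (decay_rate_mul_abs_le n x Hx) as HQ.
  apply Rle_trans with (exp (b ^ 4 / 6) * exp (- (decay_rate n * Rabs x))).
  - apply Rle_trans with (exp (- kappa * sqrt (INR n) * x ^ 2) * exp (b ^ 2 * x ^ 2 / 2 + b ^ 4 / 6)).
    + apply Rmult_le_compat_r; [left; apply exp_pos | now apply psi_le_exp_kappa].
    + rewrite <- !exp_plus. apply exp_le_compat.
      assert (b ^ 2 * x ^ 2 <= kappa * sqrt (INR n) * x ^ 2)
        by (apply Rmult_le_compat_r; [apply pow2_ge_0 | exact Hb]).
      lra.
  - apply Rmult_le_compat_l; [left; apply exp_pos |].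
    replace (decay_rate n ^ 2 * x ^ 2) with ((decay_rate n * Rabs x) ^ 2)
      by (rewrite Rpow_mult_distr, pow2_abs; reflexivity).
    apply exp_neg_le_rational. apply Rmult_le_pos; [apply decay_rate_pos | apply Rabs_pos].
Qed.

Lemma psi_mul_exp_le_majorant n b x : (1 <= n)%nat -> b ^ 2 <= kappa * sqrt (INR n) ->
  psi n x * exp (b ^ 2 * x ^ 2 / 2 + b ^ 4 / 6)
  <= inner_majorant b x + outer_majorant b (decay_rate n) x.
Proof.
  intros Hn Hb. pose proof (inner_majorant_pos b x). pose proof (outer_majorant_pos b (decay_rate n) x).
  destruct (Rle_dec (Rabs (inv_root4 n * x)) (1 / 3)) as [Hin | Hout].
  - enough (psi n x * exp (b ^ 2 * x ^ 2 / 2 + b ^ 4 / 6) <= inner_majorant b x) by lra.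
    unfold inner_majorant. replace (- c4 * x ^ 4 + b ^ 2 * x ^ 2 / 2 + b ^ 4 / 6)
      with (- c4 * x ^ 4 + (b ^ 2 * x ^ 2 / 2 + b ^ 4 / 6)) by ring.
    rewrite (exp_plus (- c4 * x ^ 4)). apply Rmult_le_compat_r; [left; apply exp_pos |].
    now apply psi_le_exp_quartic.
  - pose proof (psi_mul_exp_le_outer n b x Hn Hb ltac:(lra)). lra.
Qed.

Lemma exp_neg_le_inv y : 0 < y -> exp (- y) <= / y.
Proof.
  intros Hy. rewrite exp_Ropp. apply Rinv_le_contravar; [exact Hy |].
  pose proof (exp_ineq1_le y). lra.
Qed.

Lemma Cmod_fourier_integrand_le_gauss al r xi n b x s : 0 <= al -> Rabs s <= b ->
  Cmod (fourier_integrand al r xi n x s)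
  <= exp (al * b ^ 2 / 2 + Rabs xi * b - al * x ^ 2 / 2 + INR n * Rabs r * Rabs x).
Proof.
  intros Hal Hs. rewrite Cmod_fourier_integrand.
  replace (al * b ^ 2 / 2 + Rabs xi * b - al * x ^ 2 / 2 + INR n * Rabs r * Rabs x)
    with ((al * b ^ 2 / 2 + Rabs xi * b - al * x ^ 2 / 2) + INR n * Rabs (r * x))
    by (rewrite Rabs_mult; ring).
  rewrite exp_plus, <- exp_pow. apply Rmult_le_compat; [left; apply exp_pos | apply pow_le, sqrt_pos | |].
  - apply exp_le_compat. pose proof (Rabs_pos s).
    assert (s ^ 2 <= b ^ 2) by (rewrite <- (pow2_abs s); apply pow_incr; lra).
    assert (- xi * s <= Rabs xi * b).
    { eapply Rle_trans; [apply Rle_abs |]. rewrite Rabs_mult, Rabs_Ropp.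
      apply Rmult_le_compat_l; [apply Rabs_pos | lra]. }
    nra.
  - apply pow_incr. split; [apply sqrt_pos |].
    eapply Rle_trans; [| apply cosh_le_exp_abs].
    rewrite <- (sqrt_pow2 (cosh (r * x))) at 2 by (left; apply cosh_pos).
    apply sqrt_le_1_alt. pose proof (pow2_ge_0 (sin (r * s))). lra.
Qed.

Lemma fourier_integrand_vanishes al r xi n b eps : 1 <= al -> 0 < eps ->
  exists X, 0 <= X /\ forall x s, X <= Rabs x -> Rabs s <= b ->
  Cmod (fourier_integrand al r xi n x s) <= eps.
Proof.
  intros Hal He.
  set (B := INR n * Rabs r). assert (HB : 0 <= B) by (apply Rmult_le_pos; [apply pos_INR | apply Rabs_pos]).
  set (C0 := al * b ^ 2 / 2 + Rabs xi * b).
  exists (Rmax (2 * (B + 1)) (exp C0 / eps)). split; [eapply Rle_trans; [| apply Rmax_l]; lra |].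
  intros x s Hx Hs.
  pose proof (Rle_trans _ _ _ (Rmax_l _ _) Hx) as Hx1.
  pose proof (Rle_trans _ _ _ (Rmax_r _ _) Hx) as Hx2.
  eapply Rle_trans; [apply Cmod_fourier_integrand_le_gauss; [lra | exact Hs] |]. fold B C0.
  assert (Hx0 : 0 < Rabs x) by lra.
  apply Rle_trans with (exp C0 * exp (- Rabs x)).
  { rewrite <- exp_plus. apply exp_le_compat. rewrite <- (pow2_abs x). nra. }
  apply Rle_trans with (exp C0 * / Rabs x).
  { apply Rmult_le_compat_l; [left; apply exp_pos | now apply exp_neg_le_inv]. }
  apply Rle_div_l in Hx2; [| lra]. apply (Rmult_le_reg_r (Rabs x)); [lra |].
  rewrite Rmult_assoc, Rinv_l by lra. lra.
Qed.

(** * Real integrals *)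

Lemma continuous_of_ex_derive (f : R -> R) x : ex_derive f x -> continuous f x.
Proof. apply (ex_derive_continuous (K:=R_AbsRing) (V:=R_NormedModule)). Qed.

Section RealIntegrals.

Variable f : R -> R.
Hypothesis f_cont : forall x, continuous f x.

Lemma ex_RInt_cont a b : ex_RInt f a b.
Proof. apply (ex_RInt_continuous (V:=R_CompleteNormedModule)). intros; apply f_cont. Qed.

Lemma RInt_Chasles_cont a b c : RInt f a b + RInt f b c = RInt f a c.
Proof. apply (RInt_Chasles (V:=R_CompleteNormedModule)); apply ex_RInt_cont. Qed.

Hypothesis f_ge0 : forall x, 0 <= f x.

Lemma RInt_ge_0_cont a b : a <= b -> 0 <= RInt f a b.
Proof. intros Hab. apply RInt_ge_0; auto using ex_RInt_cont. Qed.

Lemma RInt_le_RInt_subinterval a A C b : a <= A -> A <= C -> C <= b -> RInt f A C <= RInt f a b.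
Proof.
  intros. rewrite <- (RInt_Chasles_cont a A b), <- (RInt_Chasles_cont A C b).
  pose proof (RInt_ge_0_cont a A). pose proof (RInt_ge_0_cont C b). lra.
Qed.

Lemma RInt_le_improper l : improper_integral_R f l -> forall A C, A <= C -> RInt f A C <= l.
Proof.
  intros [Hint Hlim] A C HAC. apply Rle_plus_epsilon. intros eps Heps.
  destruct (Hlim eps (Rlt_gt _ _ Heps)) as [M HM].
  set (a := Rmin A (- M)). set (b := Rmax C M).
  destruct (Hint a b) as [pr].
  specialize (HM a b pr (Rmin_r _ _) (Rmax_r _ _)). rewrite <- RInt_Reals in HM.
  pose proof (RInt_le_RInt_subinterval a A C b (Rmin_l _ _) HAC (Rmax_l _ _)).
  apply Rabs_def2 in HM. lra.
Qed.

End RealIntegrals.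

Lemma RInt_comp_affine (f : R -> R) u v a b : (forall x, continuous f x) -> u <> 0 ->
  RInt (fun y => f (u * y + v)) a b = / u * RInt f (u * a + v) (u * b + v).
Proof.
  intros Hf Hu.
  rewrite <- (RInt_comp_lin (V:=R_CompleteNormedModule) f u v a b) by now apply ex_RInt_cont.
  rewrite <- (RInt_scal (V:=R_CompleteNormedModule)).
  - apply RInt_ext. intros x _. cbv [scal]; simpl; unfold mult; simpl. field. exact Hu.
  - apply (ex_RInt_comp_lin (V:=R_NormedModule)). now apply ex_RInt_cont.
Qed.

Lemma RInt_even (f : R -> R) a b : (forall x, continuous f x) -> (forall y, f (- y) = f y) ->
  RInt f (- b) (- a) = RInt f a b.
Proof.
  intros Hf Heven. transitivity (RInt (fun y => f (-1 * y + 0)) a b).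
  - rewrite RInt_comp_affine by (auto; lra).
    replace (-1 * a + 0) with (- a) by ring. replace (-1 * b + 0) with (- b) by ring.
    rewrite <- (opp_RInt_swap (V:=R_CompleteNormedModule)) by now apply ex_RInt_cont.
    cbv [opp]; simpl. field.
  - apply RInt_ext. intros x _. replace (-1 * x + 0) with (- x) by ring. apply Heven.
Qed.

Definition exp_quartic (y : R) := exp (- y ^ 4 / 12).

Lemma continuous_exp_quartic x : continuous exp_quartic x.
Proof. apply continuous_of_ex_derive. unfold exp_quartic. auto_derive; auto. Qed.

Lemma exp_quartic_ge_0 x : 0 <= exp_quartic x.
Proof. left; apply exp_pos. Qed.

Lemma RInt_exp_quartic_half I Y : improper_integral_R exp_quartic I -> 0 <= Y ->
  RInt exp_quartic 0 Y <= I / 2.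
Proof.
  intros HI HY.
  assert (E : RInt exp_quartic (- Y) 0 = RInt exp_quartic 0 Y).
  { rewrite <- Ropp_0 at 1. apply RInt_even. apply continuous_exp_quartic.
    intros; unfold exp_quartic; f_equal; field. }
  pose proof (RInt_le_improper _ continuous_exp_quartic exp_quartic_ge_0 I HI (- Y) Y ltac:(lra)).
  rewrite <- (RInt_Chasles_cont _ continuous_exp_quartic (- Y) 0 Y) in H. lra.
Qed.

Lemma quartic_integral_ge I : improper_integral_R exp_quartic I -> 11 / 6 <= I.
Proof.
  intros HI.
  eapply Rle_trans; [| apply (RInt_le_improper _ continuous_exp_quartic exp_quartic_ge_0 I HI (-1) 1); lra].
  apply Rle_trans with (RInt (fun _ => 11 / 12) (-1) 1).
  - rewrite RInt_const. repeat change (scal ?u ?v) with (u * v). lra.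
  - apply RInt_le; [lra | apply ex_RInt_const | now apply ex_RInt_cont, continuous_exp_quartic |].
    intros y Hy. unfold exp_quartic. pose proof (exp_ineq1_le (- y ^ 4 / 12)).
    assert (y ^ 2 <= 1) by nra.
    assert (y ^ 4 <= 1) by (replace (y ^ 4) with ((y ^ 2) ^ 2) by ring; nra).
    lra.
Qed.

Definition tilted_quartic (d y : R) := exp (- y ^ 4 / 12 + d ^ 2 * y ^ 2 / 6).

Lemma continuous_tilted_quartic d x : continuous (tilted_quartic d) x.
Proof. apply continuous_of_ex_derive. unfold tilted_quartic. auto_derive; auto. Qed.

Lemma tilted_quartic_le_peak d y : tilted_quartic d y <= exp (d ^ 4 / 12).
Proof. apply exp_le_compat. pose proof (pow2_ge_0 (y ^ 2 - d ^ 2)). nra. Qed.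

Lemma tilted_quartic_le_tail d y : 0 <= d <= y ->
  tilted_quartic d y <= exp (d ^ 4 / 12) * exp_quartic (1 * y + - d).
Proof.
  intros Hd. unfold tilted_quartic, exp_quartic. rewrite <- exp_plus. apply exp_le_compat.
  assert (0 <= (y - d) ^ 3 * d) by (apply Rmult_le_pos; [apply pow_le |]; lra).
  assert (0 <= (y - d) ^ 2 * d ^ 2) by (apply Rmult_le_pos; apply pow2_ge_0).
  assert (y ^ 4 - 2 * d ^ 2 * y ^ 2 - (y - d) ^ 4 + d ^ 4
          = 4 * (y - d) ^ 3 * d + 4 * (y - d) ^ 2 * d ^ 2) by ring.
  replace (1 * y + - d) with (y - d) by ring. lra.
Qed.

Lemma RInt_tilted_quartic_tail_le I d X : improper_integral_R exp_quartic I -> 0 <= d <= X ->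
  RInt (tilted_quartic d) d X <= exp (d ^ 4 / 12) * (I / 2).
Proof.
  intros HI Hd. pose proof (exp_pos (d ^ 4 / 12)).
  assert (Hcont : forall x, continuous (fun y => exp_quartic (1 * y + - d)) x)
    by (intros; apply continuous_of_ex_derive; unfold exp_quartic; auto_derive; auto).
  apply Rle_trans with (RInt (fun y => scal (exp (d ^ 4 / 12)) (exp_quartic (1 * y + - d))) d X).
  - apply RInt_le; [lra | apply ex_RInt_cont, continuous_tilted_quartic | |].
    + apply (ex_RInt_scal (V:=R_NormedModule)). now apply ex_RInt_cont.
    + intros y Hy. apply tilted_quartic_le_tail. lra.
  - rewrite (RInt_scal (V:=R_CompleteNormedModule)) by now apply ex_RInt_cont.
    rewrite RInt_comp_affine by (auto using continuous_exp_quartic; lra).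
    replace (1 * d + - d) with 0 by ring. rewrite Rinv_1, Rmult_1_l.
    apply Rmult_le_compat_l; [lra |]. apply RInt_exp_quartic_half; [exact HI | lra].
Qed.

(* The exponent peaks at [d^4/12] for [|y| = d]: the window [[-d, d]] contributes [2 d] times
   the peak, and each tail at most the peak times half of [I]. *)
Lemma RInt_tilted_quartic_le I d A C : improper_integral_R exp_quartic I -> 0 <= d -> A <= C ->
  RInt (tilted_quartic d) A C <= exp (d ^ 4 / 12) * (2 * d + I).
Proof.
  intros HI Hd HAC. pose proof (exp_pos (d ^ 4 / 12)).
  set (h := tilted_quartic d). assert (h_cont : forall x, continuous h x) by apply continuous_tilted_quartic.
  assert (h_ge0 : forall x, 0 <= h x) by (intros; left; apply exp_pos).
  set (X := Rmax (Rmax (Rabs A) (Rabs C)) d).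
  assert (HA : Rabs A <= X) by (eapply Rle_trans; apply Rmax_l).
  assert (HCX : Rabs C <= X) by (eapply Rle_trans; [apply Rmax_r | apply Rmax_l]).
  assert (HdX : d <= X) by apply Rmax_r.
  eapply Rle_trans.
  { apply (RInt_le_RInt_subinterval h h_cont h_ge0 (- X) A C X); auto;
      [pose proof (Rle_abs (- A)) | pose proof (Rle_abs C)]; rewrite ?Rabs_Ropp in *; lra. }
  rewrite <- (RInt_Chasles_cont h h_cont (- X) (- d) X), <- (RInt_Chasles_cont h h_cont (- d) d X).
  rewrite (RInt_even h d X h_cont) by (intros; unfold h, tilted_quartic; f_equal; field).
  assert (Hwindow : RInt h (- d) d <= 2 * d * exp (d ^ 4 / 12)).
  { apply Rle_trans with (RInt (fun _ => exp (d ^ 4 / 12)) (- d) d).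
    - apply RInt_le; [lra | now apply ex_RInt_cont | apply ex_RInt_const |].
      intros y _. apply tilted_quartic_le_peak.
    - rewrite RInt_const. change (scal ?u ?v) with (u * v). lra. }
  pose proof (RInt_tilted_quartic_tail_le I d X HI ltac:(lra)) as Htail. fold h in Htail. lra.
Qed.

Lemma continuous_inner_majorant b x : continuous (inner_majorant b) x.
Proof. apply continuous_of_ex_derive. unfold inner_majorant. auto_derive; auto. Qed.

Lemma continuous_outer_majorant b Q x : continuous (outer_majorant b Q) x.
Proof. apply continuous_of_ex_derive. unfold outer_majorant. auto_derive. nra. Qed.

Lemma inner_majorant_eq b x :
  inner_majorant b x = exp (b ^ 4 / 6) * tilted_quartic (sqrt 3 * b / lambda) (lambda * x + 0).
Proof.
  unfold inner_majorant, tilted_quartic, c4, lambda. rewrite <- exp_plus. f_equal.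
  replace ((sqrt 3 * b / (24 / 25)) ^ 2) with (sqrt 3 ^ 2 * b ^ 2 / (24 / 25) ^ 2) by field.
  rewrite pow2_sqrt by lra. field.
Qed.

Lemma RInt_inner_majorant_le I b a c : improper_integral_R exp_quartic I -> 0 <= b -> a <= c ->
  RInt (inner_majorant b) a c <= 625 / 576 * exp (13 * b ^ 4 / 12) * (2 * sqrt 3 * b + I).
Proof.
  intros HI Hb Hac.
  assert (Hl : lambda = 24 / 25) by reflexivity.
  set (d := sqrt 3 * b / lambda).
  assert (Hd : 0 <= d) by (unfold d; rewrite Hl; pose proof (sqrt_pos 3); apply Rdiv_le_0_compat; nra).
  rewrite (RInt_ext _ (fun x => scal (exp (b ^ 4 / 6)) (tilted_quartic d (lambda * x + 0))))
    by (intros; apply inner_majorant_eq).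
  rewrite (RInt_scal (V:=R_CompleteNormedModule)).
  2: { apply ex_RInt_cont. intros. apply continuous_of_ex_derive. unfold tilted_quartic. auto_derive; auto. }
  change (scal ?u ?v) with (u * v).
  rewrite RInt_comp_affine by (try apply continuous_tilted_quartic; rewrite Hl; lra).
  pose proof (RInt_tilted_quartic_le I d (lambda * a + 0) (lambda * c + 0) HI Hd
                ltac:(rewrite Hl; lra)) as Hint.
  pose proof (quartic_integral_ge I HI). pose proof (sqrt_pos 3).
  assert (Hexp : exp (b ^ 4 / 6) * exp (d ^ 4 / 12) <= exp (13 * b ^ 4 / 12)).
  { rewrite <- exp_plus. apply exp_le_compat. unfold d. rewrite Hl.
    replace ((sqrt 3 * b / (24 / 25)) ^ 4) with ((sqrt 3 ^ 2) ^ 2 * b ^ 4 / (24 / 25) ^ 4) by field.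
    rewrite pow2_sqrt by lra. pose proof (pow_le b 4 Hb). lra. }
  apply Rle_trans with (exp (b ^ 4 / 6) * (/ lambda * (exp (d ^ 4 / 12) * (2 * d + I)))).
  { apply Rmult_le_compat_l; [left; apply exp_pos |].
    apply Rmult_le_compat_l; [rewrite Hl; lra | exact Hint]. }
  replace (exp (b ^ 4 / 6) * (/ lambda * (exp (d ^ 4 / 12) * (2 * d + I))))
    with ((exp (b ^ 4 / 6) * exp (d ^ 4 / 12)) * (625 / 576 * (2 * sqrt 3 * b) + 25 / 24 * I))
    by (unfold d; rewrite Hl; field).
  set (E := exp (13 * b ^ 4 / 12)) in *. pose proof (exp_pos (13 * b ^ 4 / 12)). fold E in H1.
  apply Rle_trans with (E * (625 / 576 * (2 * sqrt 3 * b) + 25 / 24 * I)).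
  - apply Rmult_le_compat_r; [nra | exact Hexp].
  - assert (0 <= E * I) by nra. nra.
Qed.

Lemma RInt_lorentzian_le Q a c : 0 < Q -> a <= c -> RInt (fun x => 2 / (1 + Q ^ 2 * x ^ 2)) a c <= 2 * PI / Q.
Proof.
  intros HQ Hac.
  set (G := fun x => 2 / Q * atan (Q * x)).
  assert (HG : forall x, is_derive G x (2 / (1 + Q ^ 2 * x ^ 2))).
  { intros x. unfold G. auto_derive; auto. unfold Rsqr. field. split; nra. }
  assert (Hcont : forall x, continuous (fun x => 2 / (1 + Q ^ 2 * x ^ 2)) x)
    by (intros; apply continuous_of_ex_derive; auto_derive; nra).
  rewrite (is_RInt_unique _ _ _ _ (is_RInt_derive G _ a c (fun x _ => HG x) (fun x _ => Hcont x))).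
  change (minus (G c) (G a)) with (G c - G a). unfold G.
  pose proof (atan_bound (Q * c)). pose proof (atan_bound (Q * a)).
  replace (2 * PI / Q) with (2 / Q * PI) by (field; lra).
  rewrite <- Rmult_minus_distr_l. apply Rmult_le_compat_l; [apply Rdiv_le_0_compat |]; lra.
Qed.

Lemma RInt_outer_majorant_le b Q a c : 0 < Q -> a <= c ->
  RInt (outer_majorant b Q) a c <= exp (b ^ 4 / 6) * (2 * PI / Q).
Proof.
  intros HQ Hac. unfold outer_majorant.
  rewrite (RInt_ext _ (fun x => scal (exp (b ^ 4 / 6)) (2 / (1 + Q ^ 2 * x ^ 2)))) by reflexivity.
  rewrite (RInt_scal (V:=R_CompleteNormedModule)).
  2: { apply ex_RInt_cont. intros. apply continuous_of_ex_derive. auto_derive. nra. }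
  apply Rmult_le_compat_l; [left; apply exp_pos |]. now apply RInt_lorentzian_le.
Qed.

(* The constant [K] absorbs both pieces: [625/576] from the change of variables [y = lambda x]
   in the inner part, and the outer part [O(1/Q)] once [Q >= 6], using [I >= 11/6]. *)
Lemma RInt_majorant_le I b Q a c : improper_integral_R exp_quartic I -> 0 <= b -> 6 <= Q -> a <= c ->
  RInt (fun x => inner_majorant b x + outer_majorant b Q x) a c <= K I b.
Proof.
  intros HI Hb HQ Hac.
  rewrite (RInt_plus (V:=R_CompleteNormedModule) (inner_majorant b) (outer_majorant b Q))
    by (apply ex_RInt_cont; intros;
        first [apply continuous_inner_majorant | apply continuous_outer_majorant]).
  change (plus ?u ?v) with (u + v).
  pose proof (RInt_inner_majorant_le I b a c HI Hb Hac).
  pose proof (RInt_outer_majorant_le b Q a c ltac:(lra) Hac).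
  pose proof (quartic_integral_ge I HI). pose proof PI_4. pose proof PI_RGT_0.
  assert (Hexp : exp (b ^ 4 / 6) <= exp (13 * b ^ 4 / 12)).
  { apply exp_le_compat. pose proof (pow_le b 4 Hb). lra. }
  assert (HPQ : 2 * PI / Q <= 4 / 3) by (apply Rle_div_l; lra).
  assert (0 <= 2 * PI / Q) by (apply Rdiv_le_0_compat; lra).
  assert (exp (b ^ 4 / 6) * (2 * PI / Q) <= exp (13 * b ^ 4 / 12) * (4 / 3)).
  { apply Rmult_le_compat; auto. left; apply exp_pos. }
  unfold K. pose proof (exp_pos (13 * b ^ 4 / 12)).
  assert (0 <= sqrt 3 * b) by (apply Rmult_le_pos; [apply sqrt_pos | lra]).
  set (E := exp (13 * b ^ 4 / 12)) in *.
  assert (E * (4 / 3) <= E * ((2 - 625 / 576) * (2 * sqrt 3 * b + I))) by (apply Rmult_le_compat_l; lra).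
  nra.
Qed.

(** * The Fourier integral *)

Lemma norm_C_R (z : C) : @norm R_AbsRing C_R_NormedModule z = Cmod z.
Proof. unfold Cmod. rewrite <- (pow2_abs (fst z)), <- (pow2_abs (snd z)). reflexivity. Qed.

Lemma Cmod_RInt_le (F : R -> C) a c : a <= c ->
  ex_RInt (fun x => fst (F x)) a c -> ex_RInt (fun x => snd (F x)) a c ->
  ex_RInt (fun x => Cmod (F x)) a c ->
  Cmod (RInt (fun x => fst (F x)) a c, RInt (fun x => snd (F x)) a c) <= RInt (fun x => Cmod (F x)) a c.
Proof.
  intros Hac H1 H2 H3. rewrite <- norm_C_R.
  apply (norm_RInt_le (V:=C_R_NormedModule) F (fun x => Cmod (F x)) a c); auto.
  - intros x _. rewrite norm_C_R. apply Rle_refl.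
  - apply (is_RInt_fct_extend_pair (U:=R_NormedModule) (V:=R_NormedModule));
      now apply (RInt_correct (V:=R_CompleteNormedModule)).
  - now apply (RInt_correct (V:=R_CompleteNormedModule)).
Qed.

Lemma Cmod_le_abs_add (z : C) : Cmod z <= Rabs (fst z) + Rabs (snd z).
Proof.
  unfold Cmod. pose proof (Rabs_pos (fst z)). pose proof (Rabs_pos (snd z)).
  rewrite <- (sqrt_pow2 (Rabs (fst z) + Rabs (snd z))) by lra.
  apply sqrt_le_1_alt. rewrite <- (pow2_abs (fst z)), <- (pow2_abs (snd z)). nra.
Qed.

Lemma Cmod_le_shift (u v u' v' : R) :
  Cmod (u, v) <= Cmod (u', v') + (Rabs (u - u') + Rabs (v - v')).
Proof.
  replace ((u, v) : C) with (Cplus (u', v') (u - u', v - v'))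
    by (unfold Cplus; cbn [fst snd]; f_equal; ring).
  eapply Rle_trans; [apply Cmod_triangle |].
  apply Rplus_le_compat_l, Cmod_le_abs_add.
Qed.

Lemma holomorphic_continuous_fst F s x : holomorphic F -> continuous (fun y => fst (F y s)) x.
Proof. intros [F' HF]. apply (continuous_of_is_derive _ (fun y => fst (F' y s))).
  intros y. apply (cr_re_x _ _ HF). Qed.
Lemma holomorphic_continuous_snd F s x : holomorphic F -> continuous (fun y => snd (F y s)) x.
Proof. intros [F' HF]. apply (continuous_of_is_derive _ (fun y => snd (F' y s))).
  intros y. apply (cr_im_x _ _ HF). Qed.

Lemma holomorphic_continuous_Cmod F s x : holomorphic F -> continuous (fun y => Cmod (F y s)) x.
Proof.
  intros [F' HF]. unfold Cmod.
  apply (continuous_comp (fun y => fst (F y s) ^ 2 + snd (F y s) ^ 2) sqrt).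
  - apply (continuous_of_is_derive _ (fun y => INR 2 * fst (F' y s) * fst (F y s) ^ pred 2
                                              + INR 2 * snd (F' y s) * snd (F y s) ^ pred 2)).
    intros y. apply derive_plus; apply is_derive_pow; [apply (cr_re_x _ _ HF) | apply (cr_im_x _ _ HF)].
  - apply continuity_pt_filterlim, continuity_pt_sqrt.
    pose proof (pow2_ge_0 (fst (F x s))). pose proof (pow2_ge_0 (snd (F x s))). lra.
Qed.

Section LargeN.

Variables (I b : R) (n : nat).
Hypotheses (HI : improper_integral_R exp_quartic I) (Hb : 0 <= b) (Hn : (1 <= n)%nat)
  (Hbn : b ^ 2 <= kappa * sqrt (INR n)) (HQ : 6 <= decay_rate n).

Lemma Cmod_psi_integrand_le_majorant xi t x : t ^ 2 = b ^ 2 ->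
  Cmod (psi_integrand n xi x t) <= exp (- xi * t) * (inner_majorant b x + outer_majorant b (decay_rate n) x).
Proof.
  intros Ht. eapply Rle_trans; [now apply Cmod_psi_integrand_le |].
  apply Rmult_le_compat_l; [left; apply exp_pos |].
  replace (t ^ 2 * x ^ 2 / 2 + t ^ 4 / 6) with (b ^ 2 * x ^ 2 / 2 + b ^ 4 / 6)
    by (replace (t ^ 4) with ((t ^ 2) ^ 2) by ring; rewrite Ht; field).
  now apply psi_mul_exp_le_majorant.
Qed.

Lemma Cmod_shifted_integral_le xi t a c : t ^ 2 = b ^ 2 -> a <= c ->
  Cmod (RInt (fun x => fst (psi_integrand n xi x t)) a c, RInt (fun x => snd (psi_integrand n xi x t)) a c)
  <= exp (- xi * t) * K I b.
Proof.
  intros Ht Hac. pose proof (holomorphic_fourier_integrand (sqrt (INR n)) (inv_root4 n) xi n) as Hhol.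
  set (M := fun x => inner_majorant b x + outer_majorant b (decay_rate n) x).
  assert (HM : forall x, continuous M x).
  { intros x. apply (continuous_plus (inner_majorant b));
      [apply continuous_inner_majorant | apply continuous_outer_majorant]. }
  eapply Rle_trans; [apply Cmod_RInt_le; [exact Hac | ..] |].
  1-3: apply ex_RInt_cont; intros;
    first [ apply holomorphic_continuous_fst | apply holomorphic_continuous_snd
          | apply holomorphic_continuous_Cmod ]; exact Hhol.
  apply Rle_trans with (RInt (fun x => scal (exp (- xi * t)) (M x)) a c).
  - apply RInt_le; [exact Hac | apply ex_RInt_cont; intros; apply holomorphic_continuous_Cmod, Hhol | |].
    + apply (ex_RInt_scal (V:=R_NormedModule)). now apply ex_RInt_cont.
    + intros x _. now apply Cmod_psi_integrand_le_majorant.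
  - rewrite (RInt_scal (V:=R_CompleteNormedModule)) by now apply ex_RInt_cont.
    apply Rmult_le_compat_l; [left; apply exp_pos |]. now apply RInt_majorant_le.
Qed.

Lemma shift_height_exists xi : exists t, t ^ 2 = b ^ 2 /\ - xi * t = - b * Rabs xi /\ Rabs t = b.
Proof.
  destruct (Rle_dec 0 xi).
  - exists b. rewrite Rabs_right, (Rabs_right b) by lra. repeat split; ring.
  - exists (- b). rewrite Rabs_left, Rabs_Ropp, (Rabs_right b) by lra. repeat split; ring.
Qed.

Lemma truncated_fourier_integral_le xi eps : 0 < eps -> exists X, forall a c, a <= - X -> X <= c ->
  Cmod (RInt (fun x => psi n x * cos (xi * x)) a c, RInt (fun x => psi n x * sin (xi * x)) a c)
  <= K I b * exp (- b * Rabs xi) + eps.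
Proof.
  intros Heps. destruct (shift_height_exists xi) as (t & Ht2 & Hxt & Htb).
  set (delta := eps / (4 * (b + 1))).
  assert (Hdelta : 0 < delta) by (apply Rdiv_lt_0_compat; lra).
  assert (Herr : 2 * delta * b + 2 * delta * b <= eps).
  { unfold delta. replace (2 * (eps / (4 * (b + 1))) * b + 2 * (eps / (4 * (b + 1))) * b)
      with (eps * (b / (b + 1))) by (field; lra).
    assert (b / (b + 1) <= 1) by (apply Rle_div_l; lra). nra. }
  assert (Hal : 1 <= sqrt (INR n)).
  { rewrite <- sqrt_1. apply sqrt_le_1_alt. apply (le_INR 1 n) in Hn. simpl in Hn. lra. }
  destruct (fourier_integrand_vanishes (sqrt (INR n)) (inv_root4 n) xi n b delta Hal Hdelta)
    as [X [HX0 HX]].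
  exists X. intros a c Ha Hc. set (F := psi_integrand n xi).
  rewrite (RInt_ext (fun x => psi n x * cos (xi * x)) (fun x => fst (F x 0)))
    by (intros; unfold F; now rewrite psi_integrand_real).
  rewrite (RInt_ext (fun x => psi n x * sin (xi * x)) (fun x => snd (F x 0)))
    by (intros; unfold F; now rewrite psi_integrand_real).
  destruct (horizontal_shift_le F a c t delta (holomorphic_fourier_integrand _ _ _ _)) as [Hre Him].
  { intros th Hth. rewrite Htb in Hth. split; apply HX; auto;
      [rewrite Rabs_left1 | rewrite Rabs_right]; lra. }
  rewrite Rabs_minus_sym, Htb in Hre, Him.
  pose proof (Cmod_shifted_integral_le xi t a c Ht2 ltac:(lra)) as HJ.
  rewrite Hxt, Rmult_comm in HJ.
  eapply Rle_trans; [apply (Cmod_le_shift _ _ (RInt (fun x => fst (F x t)) a c)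
                                             (RInt (fun x => snd (F x t)) a c)) |].
  eapply Rle_trans; [apply Rplus_le_compat; [exact HJ | apply Rplus_le_compat; [exact Hre | exact Him]] |].
  lra.
Qed.

End LargeN.

Lemma large_n_conditions b : exists n0, forall n, (n0 <= n)%nat ->
  (1 <= n)%nat /\ b ^ 2 <= kappa * sqrt (INR n) /\ 6 <= decay_rate n.
Proof.
  assert (Hk : 0 < kappa) by (unfold kappa; rewrite c4_val; lra).
  set (A := (36 + b ^ 2) / kappa).
  assert (HA : 0 <= A) by (apply Rdiv_le_0_compat; [pose proof (pow2_ge_0 b) |]; lra).
  destruct (INR_archimed 1 (A ^ 2) ltac:(lra)) as [N HN].
  exists (Nat.max 1 N). intros n Hn.
  assert (Hn1 : (1 <= n)%nat) by lia.
  assert (HnA : A <= sqrt (INR n)).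
  { rewrite <- (sqrt_pow2 A) by exact HA. apply sqrt_le_1_alt.
    apply le_INR in Hn. pose proof (le_INR N (Nat.max 1 N) (Nat.le_max_r _ _)). lra. }
  assert (Hkn : 36 + b ^ 2 <= kappa * sqrt (INR n)).
  { replace (36 + b ^ 2) with (kappa * A) by (unfold A; field; lra).
    apply Rmult_le_compat_l; lra. }
  repeat split; [exact Hn1 | pose proof (pow2_ge_0 b); lra |].
  unfold decay_rate. pose proof (inv_root4_pos n). pose proof (inv_root4_le_1 n Hn1).
  apply (Rle_div_r 6 _ (6 * inv_root4 n)); [lra |]. pose proof (pow2_ge_0 b). lra.
Qed.

Lemma improper_integral_truncation f l : improper_integral_R f l -> forall eps, 0 < eps ->
  exists M, forall a c, a <= - M -> M <= c -> Rabs (RInt f a c - l) < eps.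
Proof.
  intros [Hint Hlim] eps Heps. destruct (Hlim eps Heps) as [M HM].
  exists M. intros a c Ha Hc. destruct (Hint a c) as [pr]. rewrite (RInt_Reals f a c pr). now apply HM.
Qed.

Lemma Cmod_improper_integral_le f g re im B : improper_integral_R f re -> improper_integral_R g im ->
  (forall eps, 0 < eps -> exists X, forall a c, a <= - X -> X <= c ->
     Cmod (RInt f a c, RInt g a c) <= B + eps) ->
  Cmod (re, im) <= B.
Proof.
  intros Hre Him Htrunc. apply Rle_plus_epsilon. intros eps Heps.
  destruct (Htrunc (eps / 2)) as [X HX]; [lra |].
  destruct (improper_integral_truncation _ _ Hre (eps / 4)) as [M1 HM1]; [lra |].
  destruct (improper_integral_truncation _ _ Him (eps / 4)) as [M2 HM2]; [lra |].
  set (c := Rmax X (Rmax M1 M2)).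
  assert (HXc : X <= c) by apply Rmax_l.
  assert (HM1c : M1 <= c) by (eapply Rle_trans; [apply Rmax_l | apply Rmax_r]).
  assert (HM2c : M2 <= c) by (eapply Rle_trans; [apply Rmax_r | apply Rmax_r]).
  specialize (HX (- c) c ltac:(lra) HXc).
  specialize (HM1 (- c) c ltac:(lra) HM1c). specialize (HM2 (- c) c ltac:(lra) HM2c).
  rewrite Rabs_minus_sym in HM1, HM2.
  eapply Rle_trans; [apply Cmod_le_shift |].
  eapply Rle_trans; [apply Rplus_le_compat; [exact HX | apply Rplus_le_compat; left; eassumption] |].
  lra.
Qed.

Lemma K_nonneg I b : improper_integral_R exp_quartic I -> 0 <= b -> 0 <= K I b.
Proof.
  intros HI Hb. unfold K. pose proof (quartic_integral_ge I HI). pose proof (exp_pos (13 * b ^ 4 / 12)).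
  assert (0 <= sqrt 3 * b) by (apply Rmult_le_pos; [apply sqrt_pos | lra]).
  apply Rmult_le_pos; lra.
Qed.

Theorem proposition4p3 :
  forall Iinf : R,
  improper_integral_R (fun x => exp (- x ^ 4 / 12)) Iinf ->
  forall b eta : R, 0 <= b -> 0 < eta ->
  exists n0 : nat, forall n : nat, (n0 <= n)%nat ->
  forall xi re im : R,
  improper_integral_R (fun x => psi n x * cos (xi * x)) re ->
  improper_integral_R (fun x => psi n x * sin (xi * x)) im ->
  sqrt (re ^ 2 + im ^ 2) <= (1 + eta) * K Iinf b * exp (- b * Rabs xi).
Proof.
  intros Iinf HI b eta Hb Heta. change (improper_integral_R exp_quartic Iinf) in HI.
  destruct (large_n_conditions b) as [n0 Hn0]. exists n0.
  intros n Hn xi re im Hre Him. destruct (Hn0 n Hn) as (Hn1 & Hbn & HQ).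
  assert (Hbound : Cmod (re, im) <= K Iinf b * exp (- b * Rabs xi)).
  { apply (Cmod_improper_integral_le _ _ _ _ _ Hre Him).
    now apply truncated_fourier_integral_le. }
  pose proof (K_nonneg Iinf b HI Hb). pose proof (exp_pos (- b * Rabs xi)).
  change (sqrt (re ^ 2 + im ^ 2)) with (Cmod (re, im)). rewrite Rmult_assoc.
  assert (0 <= K Iinf b * exp (- b * Rabs xi)) by (apply Rmult_le_pos; lra).
  nra.
Qed.
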